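(* Let $G=(V,E)$ be a finite connected graph with boundary $\partial G\subset V$, and let $\alpha\in\Pi(\partial G)$ be a boundary condition. Assume that the graph $G\cup\alpha$ is not a tree and contains at least two vertices. Then for all $p\in(0,1)$ and all $q\in(0,\infty)$ with $q\neq 1$, there exist families $(\varepsilon_e)_{e\in E}\in[0,1]^E$ and $(\varepsilon'_e)_{e\in E}\in[0,1]^E$, neither of which is identically $0$, such that \[\mathbb P^G_{(\min(p,p')+\varepsilon_e)_{e}}\ \preceq\ \phi^\alpha_{G,p,q}\ \preceq\ \mathbb P^G_{(\max(p,p')-\varepsilon'_e)_{e}}.\]
   Context: Configurations are $\omega\in\{0,1\}^E$; an edge $e$ is open if $\omega(e)=1$, closed otherwise; configurations are partially ordered coordinatewise. $\Pi(\partial G)$ denotes the set of partitions of $\partial G$; vertices in the same block of $\alpha$ are called wired. $G\cup\alpha$ is the (multi)graph obtained from $G$ by identifying wired vertices (this may create self-loops). $k(\omega,\alpha)$ is the number of connected components of the graph with vertex set $V$ and edge set the open edges of $\omega$, after identifying wired vertices. For $p\in[0,1]$, $q>0$, the FK (random cluster) measure is \[\phi^\alpha_{G,p,q}(\omega)=\frac1{Z}\Big(\prod_{e\in E}p^{\omega(e)}(1-p)^{1-\omega(e)}\Big)q^{k(\omega,\alpha)},\] $Z$ the normalizing constant. Set $p':=\frac{p}{p+q(1-p)}$. For $(p_e)_{e\in E}\in[0,1]^E$, $\mathbb P^G_{(p_e)}$ is the product measure on $\{0,1\}^E$ under which each edge $e$ is open independently with probability $p_e$. For measures $\mu,\mu'$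 on $\{0,1\}^E$, $\mu\preceq\mu'$ means $\mu(A)\le\mu'(A)$ for every increasing event $A$ (an event preserved by opening edges). *)

From HB Require Import structures.
From mathcomp Require Import all_boot all_order all_algebra.
From mathcomp Require Import reals.
Set Implicit Arguments. Unset Strict Implicit. Unset Printing Implicit Defensive.
Import Order.TTheory GRing.Theory Num.Theory.
Local Open Scope ring_scope.

Section FK.
Variables (V E : finType) (src dst : E -> V).

Definition config := {ffun E -> bool}.

Definition adjF (F : pred E) : rel V := fun x y =>
  [exists e, F e && (((src e == x) && (dst e == y)) || ((src e == y) && (dst e == x)))].

Definition connected_graph : Prop := forall x y : V, connect (adjF predT) x y.

(* wired vertices for a boundary condition alpha (a partition of the boundary B) *)
Definition wired (B : {set V}) (alpha : {set {set V}}) : rel V := fun x y =>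
  [&& x \in B, y \in B & pblock alpha x == pblock alpha y].

Definition clrel (B : {set V}) (alpha : {set {set V}}) (omega : config) : rel V :=
  fun x y => adjF (fun e => omega e) x y || wired B alpha x y.

Definition kcl (B : {set V}) (alpha : {set {set V}}) (omega : config) : nat :=
  #|[set [set y | connect (clrel B alpha omega) x y] | x : V]|.

(* G cup alpha: its vertices are the classes of V under wiring; its edges are E *)
Definition all_open : config := [ffun => true].
Definition all_closed : config := [ffun => false].
Definition remove_edge (e : E) : config := [ffun f => f != e].

Definition nb_vertices_Galpha B alpha : nat := kcl B alpha all_closed.
Definition connected_Galpha B alpha : Prop := kcl B alpha all_open = 1%N.
(* a tree = a connected (multi)graph which becomes disconnected after
   removing any edge (minimally connected); self-loops / parallel edges
   are thereby excluded *)
Definition is_tree_Galpha B alpha : Prop :=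
  connected_Galpha B alpha /\ forall e : E, kcl B alpha (remove_edge e) <> 1%N.

Variable R : realType.

Definition edge_weight (p : R) (b : bool) : R := if b then p else 1 - p.

Definition fk_weight B alpha (p q : R) (omega : config) : R :=
  (\prod_(e : E) edge_weight p (omega e)) * q ^+ kcl B alpha omega.

Definition fk_Z B alpha (p q : R) : R := \sum_(omega : config) fk_weight B alpha p q omega.

Definition fk_measure B alpha (p q : R) (A : {set config}) : R :=
  (\sum_(omega in A) fk_weight B alpha p q omega) / fk_Z B alpha p q.

Definition prod_measure (pe : E -> R) (A : {set config}) : R :=
  \sum_(omega in A) \prod_(e : E) edge_weight (pe e) (omega e).

Definition config_le (w w' : config) : bool := [forall e, w e ==> w' e].

Definition increasing (A : {set config}) : Prop :=
  forall w w' : config, w \in A -> config_le w w' -> w' \in A.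

Definition st_dom (mu nu : {set config} -> R) : Prop :=
  forall A : {set config}, increasing A -> mu A <= nu A.

Definition pprime (p q : R) : R := p / (p + q * (1 - p)).

End FK.

(* Under the FK measure, the conditional probability that an edge is open given all the other
   edges is [pprime p q] if opening it merges two clusters of [G cup alpha], and [p] otherwise;
   it thus always lies between [min p p'] and [max p p'], and a sequential (Holley-type)
   comparison of one edge at a time puts the FK measure between the two product measures.
   Since [q <> 1], [p <> p'], and [G cup alpha] has an edge on a cycle (conditional probability
   [p]) as well as an edge joining two of its vertices (conditional probability [p']).  At such
   an edge [e0] the marginal probability of [e0] being open lies strictly between the extremes,
   and the comparison survives raising (resp. lowering) the parameter of [e0] alone to it. *)

From HB Require Import structures.
From mathcomp Require Import all_boot all_order all_algebra.
From mathcomp Require Import reals ring lra.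
Import Order.TTheory GRing.Theory Num.Theory.
Set Implicit Arguments. Unset Strict Implicit. Unset Printing Implicit Defensive.

Section ConnectedClasses.
Variable T : finType.
Implicit Types (r : rel T) (x y : T).

Definition conn_class r x := [set y | connect r x y].
Definition conn_classes r := [set conn_class r x | x : T].

Lemma conn_class_eq r x y : symmetric r -> connect r x y -> conn_class r x = conn_class r y.
Proof.
move=> r_sym cxy; apply/setP => z; rewrite !inE.
apply/idP/idP => [|cxz]; last exact: connect_trans cxy cxz.
by apply: connect_trans; rewrite (sym_connect_sym r_sym).
Qed.

Lemma card_conn_classes_gt0 r x : (0 < #|conn_classes r|)%N.
Proof. by apply/card_gt0P; exists (conn_class r x); apply: imset_f. Qed.

Lemma card_conn_classes_le1 r : (forall x y, connect r x y) -> (#|conn_classes r| <= 1)%N.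
Proof.
move=> r_conn; rewrite -(cards1 [set: T]) subset_leq_card //.
apply/subsetP => _ /imsetP [x _ ->]; rewrite inE; apply/eqP/setP => y.
by rewrite !inE r_conn.
Qed.

Lemma connect_invariant r (P : pred T) x y :
  P x -> (forall u v, P u -> r u v -> P v) -> connect r x y -> P y.
Proof.
move=> Px P_step /connectP [s r_s ->]; elim: s x Px r_s => //= z s IHs x Px /andP [rxz r_s].
exact: IHs (P_step _ _ Px rxz) r_s.
Qed.

Section AddEdge.
Variables (r0 r1 : rel T) (a b : T).
Hypotheses (r0_sym : symmetric r0) (r1_sym : symmetric r1) (r0_sub : subrel r0 r1).
Hypothesis r1_edge :
  forall x y, r1 x y -> [|| r0 x y, (x == a) && (y == b) | (x == b) && (y == a)].

Lemma connect_sub_edge x y : connect r0 x y -> connect r1 x y.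
Proof. by apply: connect_sub => u v /r0_sub; apply: connect1. Qed.

Lemma connect_add_edge x y : connect r1 x y ->
  [|| connect r0 x y, connect r0 x a && connect r0 b y | connect r0 x b && connect r0 a y].
Proof.
apply: (connect_invariant (P := fun z =>
  [|| connect r0 x z, connect r0 x a && connect r0 b z | connect r0 x b && connect r0 a z]));
  first by rewrite /= connect0.
move=> u v /= Iu /r1_edge /or3P [r0uv | /andP [/eqP eu /eqP ev] | /andP [/eqP eu /eqP ev]];
  move: Iu; rewrite ?eu ?ev.
- have step z : connect r0 z u -> connect r0 z v.
    by move=> czu; apply: connect_trans czu (connect1 r0uv).
  by case/or3P => [/step-> | /andP [-> /step->] | /andP [-> /step->]]; rewrite ?orbT.
- by case/or3P => [-> | /andP [-> _] | /andP [-> _]]; rewrite ?connect0 ?orbT.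
- by case/or3P => [-> | /andP [-> _] | /andP [-> _]]; rewrite ?connect0 ?orbT.
Qed.

Definition merge_class (C : {set T}) := [set y | [exists x in C, connect r1 x y]].

Lemma merge_conn_class x : merge_class (conn_class r0 x) = conn_class r1 x.
Proof.
apply/setP => y; rewrite !inE; apply/existsP/idP => [[z /andP []] | cxy].
  by rewrite inE => /connect_sub_edge; apply: connect_trans.
by exists x; rewrite inE connect0.
Qed.

Lemma conn_classes_add_edge : conn_classes r1 = merge_class @: conn_classes r0.
Proof.
by rewrite /conn_classes -imset_comp; apply: eq_imset => x /=; rewrite merge_conn_class.
Qed.

(* Only the class of [b] can be merged with another class (that of [a]). *)
Lemma merge_class_inj : {in conn_classes r0 :\ conn_class r0 b &, injective merge_class}.
Proof.
have r0_csym := sym_connect_sym r0_sym.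
move=> C D /setD1P [nb_x /imsetP [x _ eC]] /setD1P [nb_y /imsetP [y _ eD]].
subst C D; rewrite !merge_conn_class => eq_xy.
have not_b z : conn_class r0 z != conn_class r0 b -> ~~ connect r0 z b.
  by apply: contra => /(conn_class_eq r0_sym) ->.
have: y \in conn_class r1 x by rewrite eq_xy inE connect0.
rewrite inE => /connect_add_edge /or3P [|/andP [_ cby] | /andP [cxb _]].
- exact: conn_class_eq.
- by move: (not_b y nb_y); rewrite r0_csym cby.
- by move: (not_b x nb_x); rewrite cxb.
Qed.

Lemma card_conn_classes_add_edge :
  (#|conn_classes r1| <= #|conn_classes r0| <= (#|conn_classes r1|).+1)%N.
Proof.
rewrite conn_classes_add_edge leq_imset_card /=.
rewrite (cardsD1 (conn_class r0 b)) -(eqP (introT imset_injP merge_class_inj)).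
have: (#|merge_class @: (conn_classes r0 :\ conn_class r0 b)| <=
       #|merge_class @: conn_classes r0|)%N by rewrite subset_leq_card ?imsetS ?subsetDl.
by case: (_ \in _) => /= le; rewrite ?add1n ?ltnS // (leq_trans le).
Qed.

Lemma card_conn_classes_add_bridge : r1 a b -> ~~ connect r0 a b ->
  #|conn_classes r0| = (#|conn_classes r1|).+1.
Proof.
move=> r1ab nc_ab; have /andP [le1 le2] := card_conn_classes_add_edge.
apply/eqP; rewrite eqn_leq le2 ltn_neqAle le1 andbT conn_classes_add_edge.
apply/negP => /imset_injP merge_inj.
have: conn_class r0 a = conn_class r0 b.
  apply: merge_inj; rewrite ?imset_f // !merge_conn_class.
  exact/conn_class_eq/connect1.
by move/setP/(_ b); rewrite !inE connect0 => cab; rewrite cab in nc_ab.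
Qed.

End AddEdge.
End ConnectedClasses.

Local Open Scope ring_scope.

Section FlipEdge.
Variable E : finType.
Implicit Types (w eta : config E) (e f : E) (S : {set E}).

Definition flip_edge e w : config E := [ffun f => if f == e then ~~ w e else w f].

Lemma flip_edgeE e w f : flip_edge e w f = if f == e then ~~ w e else w f.
Proof. by rewrite ffunE. Qed.

Lemma flip_edge_at e w : flip_edge e w e = ~~ w e.
Proof. by rewrite flip_edgeE eqxx. Qed.

Lemma flip_edge_ne e w f : f != e -> flip_edge e w f = w f.
Proof. by rewrite flip_edgeE => /negbTE ->. Qed.

Lemma flip_edgeK e : involutive (flip_edge e).
Proof.
by move=> w; apply/ffunP => f; rewrite !flip_edgeE; case: eqP => [->|]; rewrite ?eqxx ?negbK.
Qed.

Lemma sum_flip_edge (R : nmodType) e (F : config E -> R) :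
  \sum_(eta : config E | eta e) F eta = \sum_(eta : config E | ~~ eta e) F (flip_edge e eta).
Proof.
by rewrite (reindex_inj (can_inj (flip_edgeK e))); apply: eq_bigl => eta; rewrite flip_edge_at.
Qed.

Definition set_edge w e b : config E := [ffun f => if f == e then b else w f].

Definition agree_off w0 S := [set eta : config E | [forall f, (f \notin S) ==> (eta f == w0 f)]].

Lemma agree_off_set0 w0 : agree_off w0 set0 = [set w0].
Proof.
apply/setP => eta; rewrite !inE; apply/forallP/eqP => [agree | ->]; last by move=> f; rewrite eqxx implybT.
by apply/ffunP => f; have := agree f; rewrite inE => /eqP.
Qed.

Lemma agree_offT w0 : agree_off w0 setT = setT.
Proof. by apply/setP => eta; rewrite !inE; apply/forallP => f; rewrite inE. Qed.

Lemma agree_off_setD1 w0 S e b eta : e \in S ->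
  (eta \in agree_off (set_edge w0 e b) (S :\ e)) = (eta \in agree_off w0 S) && (eta e == b).
Proof.
move=> eS; rewrite !inE; apply/forallP/andP => [agree | [/forallP agree /eqP etae] f].
  split; last by have := agree e; rewrite in_setD1 eqxx ffunE eqxx.
  apply/forallP => f; apply/implyP => fS; have fe : f != e by apply: contraNneq fS => ->.
  by have := agree f; rewrite in_setD1 (negbTE fS) andbF ffunE (negbTE fe).
apply/implyP; rewrite in_setD1 negb_and negbK ffunE.
by case: (eqVneq f e) => [-> | _ /= fS]; [rewrite etae | have := agree f; rewrite fS].
Qed.

Lemma flip_edge_agree_off w0 S e eta : e \in S ->
  (flip_edge e eta \in agree_off (set_edge w0 e false) (S :\ e)) =
  (eta \in agree_off (set_edge w0 e true) (S :\ e)).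
Proof.
move=> eS; rewrite !agree_off_setD1 // flip_edge_at; congr (_ && _); last by case: (eta e).
rewrite !inE; apply: eq_forallb => f.
by case: (eqVneq f e) => [-> | fe]; [rewrite eS | rewrite flip_edge_ne].
Qed.

Lemma sum_agree_off_split (R : nmodType) w0 S e (P : pred (config E)) (F : config E -> R) :
  e \in S ->
  \sum_(eta in agree_off w0 S | P eta) F eta =
  \sum_(eta in agree_off (set_edge w0 e true) (S :\ e) | P eta) F eta +
  \sum_(eta in agree_off (set_edge w0 e false) (S :\ e) | P eta) F eta.
Proof.
move=> eS; rewrite (bigID (fun eta : config E => eta e)) /=.
by congr (_ + _); apply: eq_bigl => eta; rewrite agree_off_setD1 //; case: (eta e);
  rewrite ?andbT ?andbF //= andbC.
Qed.

Lemma sum_agree_off_flip (R : nmodType) w0 S e (P : pred (config E)) (F : config E -> R) :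
  e \in S ->
  \sum_(eta in agree_off (set_edge w0 e true) (S :\ e) | P eta) F eta =
  \sum_(eta in agree_off (set_edge w0 e false) (S :\ e) | P (flip_edge e eta))
    F (flip_edge e eta).
Proof.
move=> eS; rewrite (reindex_inj (can_inj (flip_edgeK e))); apply: eq_bigl => eta.
by rewrite -flip_edge_agree_off // flip_edgeK.
Qed.

Lemma sum_agree_off_splitT (R : nmodType) w0 S e (F : config E -> R) : e \in S ->
  \sum_(eta in agree_off w0 S) F eta =
  \sum_(eta in agree_off (set_edge w0 e true) (S :\ e)) F eta +
  \sum_(eta in agree_off (set_edge w0 e false) (S :\ e)) F eta.
Proof.
by move/(sum_agree_off_split w0 xpredT F); rewrite !(eq_bigl _ _ (fun eta => andbT (eta \in _))).
Qed.

Lemma sum_agree_off_flipT (R : nmodType) w0 S e (F : config E -> R) : e \in S ->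
  \sum_(eta in agree_off (set_edge w0 e true) (S :\ e)) F eta =
  \sum_(eta in agree_off (set_edge w0 e false) (S :\ e)) F (flip_edge e eta).
Proof.
by move/(sum_agree_off_flip w0 xpredT F); rewrite !(eq_bigl _ _ (fun eta => andbT (eta \in _))).
Qed.

End FlipEdge.

Lemma edge_weight_ge0 (R : realType) (x : R) b : 0 <= x <= 1 -> 0 <= edge_weight x b.
Proof. by case/andP => x_ge0 x_le1; case: b => //=; rewrite subr_ge0. Qed.

Lemma edge_weight_gt0 (R : realType) (x : R) b : 0 < x < 1 -> 0 < edge_weight x b.
Proof. by case/andP => x_gt0 x_lt1; case: b => //=; rewrite subr_gt0. Qed.

Section ProductDomination.
Variables (E : finType) (R : realType) (pe : E -> R) (w : config E -> R).
Variable A : {set config E}.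
Hypotheses (A_incr : increasing A) (pe01 : forall e, 0 <= pe e <= 1).
Implicit Types (e : E) (S : {set E}) (eta : config E).

Definition prod_weight S eta := \prod_(f in S) edge_weight (pe f) (eta f).

Lemma prod_weight_ge0 S eta : 0 <= prod_weight S eta.
Proof. by apply: prodr_ge0 => f _; apply: edge_weight_ge0. Qed.

Lemma prod_weight_setD1 S e eta : e \in S ->
  prod_weight S eta = edge_weight (pe e) (eta e) * prod_weight (S :\ e) eta.
Proof. by move=> eS; rewrite /prod_weight (big_setD1 _ eS). Qed.

Lemma prod_weight_flip S e eta : prod_weight (S :\ e) (flip_edge e eta) = prod_weight (S :\ e) eta.
Proof. by apply: eq_bigr => f /setD1P [fe _]; rewrite flip_edge_ne. Qed.

(* With the edges outside [S] frozen as in [w0], the product measure on [S] gives [A] at most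
   the probability that the measure with weights [w] gives it. *)
Definition restricted_domination S (w0 : config E) :=
  (\sum_(eta in agree_off w0 S) w eta) *
    (\sum_(eta in agree_off w0 S | eta \in A) prod_weight S eta)
  <= \sum_(eta in agree_off w0 S | eta \in A) w eta.

(* Condition on [e]: [A] is likelier under the product measure when [e] is open, and [w] opens
   [e] with probability at least [pe e]; the two comparisons combine as in Chebyshev's sum
   inequality. *)
Lemma restricted_domination_step S e (w0 : config E) : e \in S ->
  (forall b, restricted_domination (S :\ e) (set_edge w0 e b)) ->
  pe e * (\sum_(eta in agree_off (set_edge w0 e false) (S :\ e)) w eta)
    <= (1 - pe e) * (\sum_(eta in agree_off (set_edge w0 e true) (S :\ e)) w eta) ->
  restricted_domination S w0.
Proof.
move=> eS IH marginal; rewrite /restricted_domination.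
set D1 := agree_off (set_edge w0 e true) (S :\ e).
set D0 := agree_off (set_edge w0 e false) (S :\ e).
rewrite (sum_agree_off_splitT _ _ eS) !(sum_agree_off_split _ _ _ eS) -/D1 -/D0.
have pwD b : \sum_(eta in agree_off (set_edge w0 e b) (S :\ e) | eta \in A) prod_weight S eta =
    edge_weight (pe e) b *
      \sum_(eta in agree_off (set_edge w0 e b) (S :\ e) | eta \in A) prod_weight (S :\ e) eta.
  rewrite mulr_sumr; apply: eq_bigr => eta /andP [etaD _].
  by move: etaD; rewrite (prod_weight_setD1 _ eS) agree_off_setD1 // => /andP [_ /eqP ->].
rewrite (pwD true) (pwD false) /=.
have open_more : \sum_(eta in D0 | eta \in A) prod_weight (S :\ e) eta <=
                 \sum_(eta in D1 | eta \in A) prod_weight (S :\ e) eta.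
  rewrite /D1 sum_agree_off_flip // -/D0.
  under [X in _ <= X]eq_bigr do rewrite prod_weight_flip.
  rewrite big_mkcond [X in _ <= X]big_mkcond /=; apply: ler_sum => eta _.
  case: (boolP (eta \in D0)) => //= etaD0; case: (boolP (eta \in A)) => etaA /=.
    suff -> : flip_edge e eta \in A by [].
    apply: (A_incr etaA); apply/forallP => f; apply/implyP => etaf.
    rewrite flip_edgeE; case: eqP => [fe|//]; subst f.
    by move: etaD0; rewrite agree_off_setD1 // => /andP [_ /eqP etae]; rewrite etae in etaf.
  by case: (_ \in A) => //; apply: prod_weight_ge0.
have := IH true; have := IH false; rewrite /restricted_domination -/D1 -/D0.
move: open_more marginal; set p := pe e.
set W1 := \sum_(eta in D1) w eta; set W0 := \sum_(eta in D0) w eta.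
set a1 := \sum_(eta in D1 | _) w eta; set a0 := \sum_(eta in D0 | _) w eta.
set x1 := \sum_(eta in D1 | _) _; set x0 := \sum_(eta in D0 | _) _.
move=> x01 marg h0 h1.
have : 0 <= (x1 - x0) * ((1 - p) * W1 - p * W0) by apply: mulr_ge0; rewrite subr_ge0.
nra.
Qed.

Lemma restricted_dominationP S (w0 : config E) :
  (forall e eta, e \in S -> eta e = false ->
     pe e * w eta <= (1 - pe e) * w (flip_edge e eta)) ->
  restricted_domination S w0.
Proof.
move cardS: #|S| => n; elim: n S cardS w0 => [|n IHn] S cardS w0 cond.
  move/eqP: cardS; rewrite cards_eq0 => /eqP ->.
  rewrite /restricted_domination agree_off_set0 big_set1 !big_mkcondr !big_set1.
  by rewrite /prod_weight big_set0; case: (w0 \in A); rewrite ?mulr1 ?mulr0.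
have [e eS] : exists e, e \in S by apply/card_gt0P; rewrite cardS.
apply: (restricted_domination_step eS).
  move=> b; apply: IHn; first by move: cardS; rewrite (cardsD1 e S) eS => [[]].
  by move=> f eta /setD1P [_ fS]; apply: cond.
rewrite sum_agree_off_flipT // !mulr_sumr; apply: ler_sum => eta.
by rewrite agree_off_setD1 // => /andP [_ /eqP]; apply: cond.
Qed.

(* At [e0] only the marginal of [w], not its conditional probabilities, must exceed [pe e0]. *)
Lemma prod_measure_dominated e0 :
  (forall e eta, e != e0 -> eta e = false ->
     pe e * w eta <= (1 - pe e) * w (flip_edge e eta)) ->
  pe e0 * (\sum_(eta : config E | ~~ eta e0) w eta)
    <= (1 - pe e0) * (\sum_(eta : config E | eta e0) w eta) ->
  (\sum_eta w eta) * prod_measure pe A <= \sum_(eta in A) w eta.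
Proof.
move=> cond marginal; pose w0 : config E := all_closed E.
have e0T : e0 \in [set: E] by rewrite inE.
have sum_e0 b : \sum_(eta in agree_off (set_edge w0 e0 b) (setT :\ e0)) w eta =
                \sum_(eta : config E | eta e0 == b) w eta.
  by apply: eq_bigl => eta; rewrite agree_off_setD1 // agree_offT inE.
have := @restricted_domination_step setT e0 w0 e0T.
rewrite /restricted_domination agree_offT !sum_e0.
rewrite (eq_bigl _ _ (fun eta : config E => eqbF_neg (eta e0))).
rewrite (eq_bigl _ _ (fun eta : config E => eqb_id (eta e0))) => /(_ _ marginal).
have -> : \sum_eta w eta = \sum_(eta in setT) w eta by apply: eq_bigl => eta; rewrite inE.
have -> : \sum_(eta in A) w eta = \sum_(eta in setT | eta \in A) w eta.
  by apply: eq_bigl => eta; rewrite inE.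
have -> : prod_measure pe A = \sum_(eta in setT | eta \in A) prod_weight setT eta.
  apply: eq_big => [eta | eta _]; first by rewrite inE.
  by apply: eq_bigl => f; rewrite inE.
apply=> b; apply: restricted_dominationP => e eta /setD1P [ne _].
exact: cond.
Qed.

End ProductDomination.

Section Clusters.
Variables (V E : finType) (src dst : E -> V) (B : {set V}) (alpha : {set {set V}}).
Implicit Types (eta : config E) (e : E) (x y : V).
Local Notation kcl := (kcl src dst B alpha).
Local Notation clrel := (clrel src dst B alpha).

Lemma adjF_sym (F : pred E) : symmetric (adjF src dst F).
Proof. by move=> x y; apply: eq_existsb => e; rewrite orbC. Qed.

Lemma clrel_sym eta : symmetric (clrel eta).
Proof.
move=> x y; rewrite /clrel adjF_sym /wired; congr (_ || _).
by rewrite andbA [(x \in B) && _]andbC -andbA eq_sym.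
Qed.

Lemma kclE eta : kcl eta = #|conn_classes (clrel eta)|.
Proof. by []. Qed.

Lemma clrel_flip_edge_sub eta e : eta e = false -> subrel (clrel eta) (clrel (flip_edge e eta)).
Proof.
move=> etae x y /orP [/existsP [f /andP [etaf xy]] | wxy]; last by rewrite /clrel wxy orbT.
apply/orP; left; apply/existsP; exists f; rewrite xy andbT flip_edgeE.
by case: eqP => [fe | //]; rewrite fe etae in etaf.
Qed.

Lemma clrel_flip_edge eta e x y : clrel (flip_edge e eta) x y ->
  [|| clrel eta x y, (x == src e) && (y == dst e) | (x == dst e) && (y == src e)].
Proof.
case/orP => [/existsP [f /andP [etaf xy]] | wxy]; last by rewrite /clrel wxy orbT.
case: (eqVneq f e) => [fe | fe].
  by subst f; case/orP: xy => /andP [/eqP <- /eqP <-]; rewrite !eqxx ?orbT.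
apply/orP; left; apply/orP; left; apply/existsP; exists f.
by rewrite xy andbT -(flip_edge_ne eta fe).
Qed.

Lemma clrel_flip_edge_at eta e : eta e = false -> clrel (flip_edge e eta) (src e) (dst e).
Proof.
by move=> etae; apply/orP; left; apply/existsP; exists e; rewrite flip_edge_at etae !eqxx.
Qed.

Lemma kcl_flip_edge eta e : eta e = false ->
  kcl eta = kcl (flip_edge e eta) \/ kcl eta = (kcl (flip_edge e eta)).+1.
Proof.
move=> etae; rewrite !kclE.
have /andP [] := card_conn_classes_add_edge (clrel_sym eta)
  (clrel_flip_edge_sub etae) (@clrel_flip_edge eta e).
by rewrite leq_eqVlt => /orP [/eqP-> | lt le]; [left | right; apply/eqP; rewrite eqn_leq lt le].
Qed.

Lemma kcl_flip_edge_bridge eta e : eta e = false ->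
  ~~ connect (clrel eta) (src e) (dst e) -> kcl eta = (kcl (flip_edge e eta)).+1.
Proof.
move=> etae; rewrite !kclE.
exact: card_conn_classes_add_bridge (clrel_sym _) (clrel_sym _) (clrel_flip_edge_sub etae)
  (@clrel_flip_edge eta e) (clrel_flip_edge_at etae).
Qed.

Lemma connect_all_edges (r : rel V) : symmetric r -> connected_graph src dst ->
  (forall e, connect r (src e) (dst e)) -> forall x y, connect r x y.
Proof.
move=> r_sym connG r_edges x y; apply: (connect_sub _ (connG x y)) => u v /existsP [e /andP [_]].
by case/orP => /andP [/eqP <- /eqP <-]; rewrite // (sym_connect_sym r_sym).
Qed.

Lemma kcl_all_open x : connected_graph src dst -> kcl (all_open E) = 1%N.
Proof.
move=> connG; apply/eqP; rewrite kclE eqn_leq (card_conn_classes_gt0 _ x) andbT.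
apply: card_conn_classes_le1 => u v; apply: (connect_sub _ (connG u v)) => s t /existsP [f adj].
by apply/connect1/orP; left; apply/existsP; exists f; rewrite ffunE.
Qed.

(* An edge of a cycle of [G cup alpha], closed in a configuration where all others are open. *)
Lemma exists_flip_edge_kcl_eq : connected_graph src dst -> ~ is_tree_Galpha src dst B alpha ->
  (2 <= nb_vertices_Galpha src dst B alpha)%N ->
  exists e, exists2 eta : config E, eta e = false & kcl eta = kcl (flip_edge e eta).
Proof.
move=> connG not_tree two_vertices.
have [x _] : exists x : V, true.
  move: two_vertices => /(leq_trans (isT : (0 < 2)%N)) /card_gt0P [_ /imsetP [x _ _]].
  by exists x.
have [/existsP [e /eqP kcl_e] | no_cycle] := boolP [exists e, kcl (remove_edge e) == 1%N].
  exists e, (remove_edge e); first by rewrite ffunE eqxx.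
  have -> : flip_edge e (remove_edge e) = all_open E.
    by apply/ffunP => f; rewrite flip_edgeE !ffunE; case: eqP; rewrite ?eqxx.
  by rewrite kcl_e (kcl_all_open x connG).
case: not_tree; split; first exact: kcl_all_open x connG.
by move=> e kcl_e; move/existsPn: no_cycle => /(_ e); rewrite kcl_e.
Qed.

(* An edge joining two distinct vertices of [G cup alpha], in the all-closed configuration. *)
Lemma exists_flip_edge_kcl_succ : connected_graph src dst ->
  (2 <= nb_vertices_Galpha src dst B alpha)%N ->
  exists e, exists2 eta : config E, eta e = false & kcl eta = (kcl (flip_edge e eta)).+1.
Proof.
move=> connG two_vertices.
have [/existsP [e ne] | all_wired] :=
  boolP [exists e, ~~ connect (clrel (all_closed E)) (src e) (dst e)].
  have closed_e : all_closed E e = false by rewrite ffunE.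
  by exists e, (all_closed E) => //; apply: kcl_flip_edge_bridge.
have := card_conn_classes_le1 (connect_all_edges (clrel_sym _) connG
  (fun e => negbNE (elimT existsPn all_wired e))).
by rewrite -kclE leqNgt (leq_trans _ two_vertices).
Qed.

End Clusters.

Lemma ltr_sum_le_lt (R : numDomainType) (I : finType) (P : pred I) (F G : I -> R) (i0 : I) :
  (forall i, P i -> F i <= G i) -> P i0 -> F i0 < G i0 ->
  \sum_(i | P i) F i < \sum_(i | P i) G i.
Proof.
move=> FG Pi0 FG0; rewrite (bigD1 i0 Pi0) [ltRHS](bigD1 i0 Pi0) ltr_leD //.
by apply: ler_sum => i /andP [Pi _]; apply: FG.
Qed.

Lemma marginal_gap (R : realFieldType) (x a b : R) : a + b != 0 ->
  (1 - x) * a - x * b = (a / (a + b) - x) * (a + b).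
Proof. by move=> ab_neq0; field. Qed.

Section FKWeight.
Variables (V E : finType) (src dst : E -> V) (B : {set V}) (alpha : {set {set V}}).
Variables (R : realType) (p q : R).
Hypotheses (p01 : 0 < p < 1) (q_gt0 : 0 < q).
Implicit Types (eta : config E) (e : E).
Local Notation kcl := (kcl src dst B alpha).
Local Notation w := (fk_weight src dst B alpha p q).
Local Notation fk := (fk_measure src dst B alpha p q).

Lemma fk_weight_gt0 eta : 0 < w eta.
Proof. by apply: mulr_gt0; [apply: prodr_gt0 => f _; apply: edge_weight_gt0 | apply: exprn_gt0]. Qed.

Lemma pprime_den_gt0 : 0 < p + q * (1 - p).
Proof. by case/andP: p01 => p_gt0 p_lt1; apply: ltr_wpDr => //; rewrite mulr_ge0 ?subr_ge0 ?ltW. Qed.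

Lemma pprime_gt0 : 0 < pprime p q.
Proof. by rewrite divr_gt0 ?pprime_den_gt0 //; case/andP: p01. Qed.

Lemma pprime_le1 : pprime p q <= 1.
Proof.
rewrite ler_pdivrMr ?pprime_den_gt0 // mul1r lerDl.
by case/andP: p01 => _ p_lt1; rewrite mulr_ge0 ?subr_ge0 ?ltW.
Qed.

Lemma pprime_neq : q != 1 -> pprime p q != p.
Proof.
move=> q_neq1; apply: contra q_neq1 => /eqP pp'.
have p_unit : p * (1 - p) != 0 by case/andP: p01 => p_gt0 p_lt1; rewrite mulf_neq0 ?gt_eqF ?subr_gt0.
have pD : p * (p + q * (1 - p)) = p.
  by rewrite -[X in X * _]pp' /pprime divfK // gt_eqF ?pprime_den_gt0.
have : (q - 1) * (p * (1 - p)) = p * (p + q * (1 - p)) - p by ring.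
by rewrite pD subrr => /eqP; rewrite mulf_eq0 (negbTE p_unit) orbF subr_eq0.
Qed.

(* For [eta e = false]: the conditional probability under [fk] that [e] is open given the other
   edges of [eta], namely [pprime p q] if opening [e] merges two clusters and [p] otherwise. *)
Definition fk_cond_open eta e := if kcl eta == (kcl (flip_edge e eta)).+1 then pprime p q else p.

Lemma fk_cond_open_ge_min eta e : Num.min p (pprime p q) <= fk_cond_open eta e.
Proof. by rewrite /fk_cond_open ge_min; case: ifP; rewrite lexx ?orbT. Qed.

Lemma fk_cond_open_le_max eta e : fk_cond_open eta e <= Num.max p (pprime p q).
Proof. by rewrite /fk_cond_open le_max; case: ifP; rewrite lexx ?orbT. Qed.

Lemma fk_flip_edge_gap eta e m : eta e = false ->
  exists2 c, 0 < c & (1 - m) * w (flip_edge e eta) - m * w eta = c * (fk_cond_open eta e - m).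
Proof.
move=> etae.
set X := (\prod_(f | f != e) edge_weight p (eta f)) * q ^+ kcl (flip_edge e eta).
have X_gt0 : 0 < X.
  by apply: mulr_gt0; [apply: prodr_gt0 => f _; apply: edge_weight_gt0 | apply: exprn_gt0].
have prod_flip : \prod_(f | f != e) edge_weight p (flip_edge e eta f) =
                 \prod_(f | f != e) edge_weight p (eta f).
  by apply: eq_bigr => f fe; rewrite flip_edge_ne.
have weights d : kcl eta = (kcl (flip_edge e eta) + d)%N ->
    w (flip_edge e eta) = p * X /\ w eta = (1 - p) * q ^+ d * X.
  move=> kcl_eta; rewrite /fk_weight kcl_eta exprD.
  rewrite [\prod_f _ (flip_edge e eta f)](bigD1 e) // [\prod_f _ (eta f)](bigD1 e) //.
  rewrite flip_edge_at etae prod_flip /X.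
  move: (\prod_(f | f != e) _) (q ^+ _) (q ^+ d) => P Q Qd.
  by split; rewrite /=; ring.
rewrite /fk_cond_open; case: (kcl_flip_edge src dst B alpha etae) => kcl_eta.
  rewrite kcl_eta ltn_eqF //; exists X => //.
  by have [-> ->] := weights 0%N (etrans kcl_eta (esym (addn0 _))); ring.
rewrite kcl_eta eqxx; exists (X * (p + q * (1 - p))); first by rewrite mulr_gt0 ?pprime_den_gt0.
have [-> ->] := weights 1%N (etrans kcl_eta (esym (addn1 _))).
by rewrite /pprime; field; rewrite gt_eqF ?pprime_den_gt0.
Qed.

Lemma fk_flip_edge_ler eta e m : eta e = false ->
  (m * w eta <= (1 - m) * w (flip_edge e eta)) = (m <= fk_cond_open eta e).
Proof.
by move=> etae; have [c c_gt0 gap] := fk_flip_edge_gap m etae; rewrite -subr_ge0 gap pmulr_rge0 ?subr_ge0.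
Qed.

Lemma fk_flip_edge_ltr eta e m : eta e = false ->
  (m * w eta < (1 - m) * w (flip_edge e eta)) = (m < fk_cond_open eta e).
Proof.
by move=> etae; have [c c_gt0 gap] := fk_flip_edge_gap m etae; rewrite -subr_gt0 gap pmulr_rgt0 ?subr_gt0.
Qed.

Lemma fk_Z_gt0 : 0 < fk_Z src dst B alpha p q.
Proof.
rewrite /fk_Z (bigD1 (all_closed E)) // ltr_wpDr ?fk_weight_gt0 //.
by apply: sumr_ge0 => eta _; apply/ltW/fk_weight_gt0.
Qed.

Definition fk_marginal e0 := fk [set eta : config E | eta e0].

Lemma fk_marginal_gap e0 x :
  (1 - x) * (\sum_(eta : config E | eta e0) w eta) - x * (\sum_(eta : config E | ~~ eta e0) w eta) =
  (fk_marginal e0 - x) * fk_Z src dst B alpha p q.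
Proof.
have Z_split : fk_Z src dst B alpha p q =
    \sum_(eta : config E | eta e0) w eta + \sum_(eta : config E | ~~ eta e0) w eta by apply: bigID.
rewrite marginal_gap -?Z_split ?gt_eqF ?fk_Z_gt0 // /fk_marginal /fk_measure.
by congr ((_ / _ - _) * _); apply: eq_bigl => eta; rewrite inE.
Qed.

Lemma fk_marginal_ge0 e0 : 0 <= fk_marginal e0.
Proof.
rewrite divr_ge0 ?(ltW fk_Z_gt0) //.
by apply: sumr_ge0 => eta _; apply/ltW/fk_weight_gt0.
Qed.

Lemma fk_marginal_le1 e0 : fk_marginal e0 <= 1.
Proof.
rewrite ler_pdivrMr ?fk_Z_gt0 // mul1r [leRHS](bigID (mem [set eta : config E | eta e0])) lerDl /=.
by apply: sumr_ge0 => eta _; apply/ltW/fk_weight_gt0.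
Qed.

Lemma fk_marginal_gtr m e0 eta0 : m <= Num.min p (pprime p q) ->
  eta0 e0 = false -> m < fk_cond_open eta0 e0 -> m < fk_marginal e0.
Proof.
move=> m_le etae0 m_lt.
rewrite -subr_gt0 -(pmulr_lgt0 _ fk_Z_gt0) -fk_marginal_gap subr_gt0.
rewrite sum_flip_edge !mulr_sumr; apply: (ltr_sum_le_lt (i0 := eta0)); last 2 first.
- by rewrite etae0.
- by rewrite fk_flip_edge_ltr.
by move=> eta /negbTE etae; rewrite fk_flip_edge_ler // (le_trans m_le) ?fk_cond_open_ge_min.
Qed.

Lemma fk_marginal_ltr M e0 eta0 : Num.max p (pprime p q) <= M ->
  eta0 e0 = false -> fk_cond_open eta0 e0 < M -> fk_marginal e0 < M.
Proof.
move=> M_ge etae0 M_gt.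
rewrite -subr_gt0 -(pmulr_lgt0 _ fk_Z_gt0) -opprB mulNr -fk_marginal_gap oppr_gt0 subr_lt0.
rewrite sum_flip_edge !mulr_sumr; apply: (ltr_sum_le_lt (i0 := eta0)); last 2 first.
- by rewrite etae0.
- by rewrite ltNge fk_flip_edge_ler // -ltNge.
move=> eta /negbTE etae.
by rewrite leNgt fk_flip_edge_ltr // -leNgt (le_trans _ M_ge) ?fk_cond_open_le_max.
Qed.

Lemma st_dom_prod_fk (pe : E -> R) e0 : (forall e, 0 <= pe e <= 1) ->
  (forall e, e != e0 -> pe e <= Num.min p (pprime p q)) -> pe e0 <= fk_marginal e0 ->
  st_dom (prod_measure pe) fk.
Proof.
move=> pe01 pe_le pe_e0 A A_incr; rewrite /fk_measure ler_pdivlMr ?fk_Z_gt0 // mulrC.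
apply: (prod_measure_dominated A_incr pe01 (e0 := e0)) => [e eta ne etae | ].
  by rewrite fk_flip_edge_ler // (le_trans (pe_le e ne)) ?fk_cond_open_ge_min.
by rewrite -subr_ge0 fk_marginal_gap pmulr_lge0 ?fk_Z_gt0 ?subr_ge0.
Qed.

(* Applied to the weights [- w], domination from below turns into domination from above. *)
Lemma st_dom_fk_prod (pe : E -> R) e0 : (forall e, 0 <= pe e <= 1) ->
  (forall e, e != e0 -> Num.max p (pprime p q) <= pe e) -> fk_marginal e0 <= pe e0 ->
  st_dom fk (prod_measure pe).
Proof.
move=> pe01 pe_ge pe_e0 A A_incr.
rewrite /fk_measure ler_pdivrMr ?fk_Z_gt0 // mulrC -lerN2 -mulNr -!sumrN.
apply: (prod_measure_dominated A_incr pe01 (e0 := e0)) => [e eta ne etae | ].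
  rewrite !mulrN lerN2 leNgt fk_flip_edge_ltr // -leNgt.
  by rewrite (le_trans _ (pe_ge e ne)) ?fk_cond_open_le_max.
rewrite !sumrN !mulrN lerN2 -subr_ge0 -opprB fk_marginal_gap -mulNr opprB.
by rewrite pmulr_lge0 ?fk_Z_gt0 ?subr_ge0.
Qed.

Lemma min_pprime_ge0 : 0 <= Num.min p (pprime p q).
Proof. by rewrite le_min (ltW pprime_gt0) andbT; case/andP: p01 => /ltW. Qed.

Lemma max_pprime_le1 : Num.max p (pprime p q) <= 1.
Proof. by rewrite ge_max pprime_le1 andbT; case/andP: p01 => _ /ltW. Qed.

Lemma fk_lower_domination m e0 eta0 : 0 <= m -> m <= Num.min p (pprime p q) ->
  eta0 e0 = false -> m < fk_cond_open eta0 e0 ->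
  exists eps : E -> R, (forall e, 0 <= eps e <= 1) /\ (exists e, eps e != 0) /\
    st_dom (prod_measure (fun e => m + eps e)) fk.
Proof.
move=> m_ge0 m_le etae0 m_lt.
have m_lt_t := fk_marginal_gtr m_le etae0 m_lt.
have t_le1 := fk_marginal_le1 e0.
exists (fun e => if e == e0 then fk_marginal e0 - m else 0); split; [|split].
- by move=> e; case: eqP => _; rewrite ?lexx ?ler01 //; apply/andP; split; lra.
- by exists e0; rewrite eqxx subr_eq0 gt_eqF.
apply: (st_dom_prod_fk (e0 := e0)) => [e | e /negbTE-> | ]; last first.
- by rewrite eqxx addrC subrK.
- by rewrite addr0.
case: eqP => _; first by rewrite addrC subrK fk_marginal_ge0.
rewrite addr0 m_ge0 (le_trans m_le) // (le_trans _ max_pprime_le1) //.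
by rewrite ge_min le_max lexx.
Qed.

Lemma fk_upper_domination M e0 eta0 : M <= 1 -> Num.max p (pprime p q) <= M ->
  eta0 e0 = false -> fk_cond_open eta0 e0 < M ->
  exists eps : E -> R, (forall e, 0 <= eps e <= 1) /\ (exists e, eps e != 0) /\
    st_dom fk (prod_measure (fun e => M - eps e)).
Proof.
move=> M_le1 M_ge etae0 M_gt.
have t_lt_M := fk_marginal_ltr M_ge etae0 M_gt.
have t_ge0 := fk_marginal_ge0 e0.
exists (fun e => if e == e0 then M - fk_marginal e0 else 0); split; [|split].
- by move=> e; case: eqP => _; rewrite ?lexx ?ler01 //; apply/andP; split; lra.
- by exists e0; rewrite eqxx subr_eq0 gt_eqF.
apply: (st_dom_fk_prod (e0 := e0)) => [e | e /negbTE-> | ]; last first.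
- by rewrite eqxx subKr.
- by rewrite subr0.
case: eqP => _; first by rewrite subKr t_ge0 fk_marginal_le1.
rewrite subr0 M_le1 andbT (le_trans _ M_ge) // (le_trans min_pprime_ge0) //.
by rewrite ge_min le_max lexx.
Qed.

Lemma fk_cond_open_attains c : connected_graph src dst -> ~ is_tree_Galpha src dst B alpha ->
  (2 <= nb_vertices_Galpha src dst B alpha)%N -> c = p \/ c = pprime p q ->
  exists e, exists2 eta : config E, eta e = false & fk_cond_open eta e = c.
Proof.
move=> connG not_tree two_vertices [-> | ->].
  have [e [eta etae kcl_eq]] := exists_flip_edge_kcl_eq connG not_tree two_vertices.
  by exists e, eta; rewrite // /fk_cond_open kcl_eq ltn_eqF.
have [e [eta etae kcl_succ]] := exists_flip_edge_kcl_succ connG two_vertices.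
by exists e, eta; rewrite // /fk_cond_open kcl_succ eqxx.
Qed.

End FKWeight.


Theorem theorem1p1 (V E : finType) (src dst : E -> V)
  (B : {set V}) (alpha : {set {set V}}) (R : realType) :
  (forall e : E, src e != dst e) ->
  connected_graph src dst ->
  partition alpha B ->
  ~ is_tree_Galpha src dst B alpha ->
  (2 <= nb_vertices_Galpha src dst B alpha)%N ->
  forall p q : R, 0 < p < 1 -> 0 < q -> q != 1 ->
  exists eps eps' : E -> R,
    (forall e, 0 <= eps e <= 1) /\ (exists e, eps e != 0) /\
    (forall e, 0 <= eps' e <= 1) /\ (exists e, eps' e != 0) /\
    st_dom (prod_measure (fun e => Num.min p (pprime p q) + eps e))
           (fk_measure src dst B alpha p q) /\
    st_dom (fk_measure src dst B alpha p q)
           (prod_measure (fun e => Num.max p (pprime p q) - eps' e)).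
Proof.
move=> _ connG _ not_tree two_vertices p q p01 q_gt0 q_neq1.
set m := Num.min p (pprime p q); set M := Num.max p (pprime p q).
have m_lt_M : m < M.
  by rewrite gt_min !lt_max !ltxx /= orbF orbC -neq_lt (pprime_neq p01 q_gt0 q_neq1).
have m_cases : m = p \/ m = pprime p q by rewrite /m minEle; case: ifP; [left | right].
have M_cases : M = p \/ M = pprime p q by rewrite /M maxEle; case: ifP; [right | left].
have [e1 [eta1 closed1 cond1]] := fk_cond_open_attains connG not_tree two_vertices M_cases.
have [e2 [eta2 closed2 cond2]] := fk_cond_open_attains connG not_tree two_vertices m_cases.
have m_lt_cond1 : m < fk_cond_open src dst B alpha p q eta1 e1 by rewrite cond1.
have cond2_lt_M : fk_cond_open src dst B alpha p q eta2 e2 < M by rewrite cond2.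
have [eps [eps01 [eps_nz lower]]] :=
  fk_lower_domination p01 q_gt0 (min_pprime_ge0 p01 q_gt0) (lexx m) closed1 m_lt_cond1.
have [eps' [eps'01 [eps'_nz upper]]] :=
  fk_upper_domination p01 q_gt0 (max_pprime_le1 p01 q_gt0) (lexx M) closed2 cond2_lt_M.
by exists eps, eps'.
Qed.
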